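(* Let $G$ be a finite $3$-group with $\psi'(G)>\frac{31}{77}$. Then either $G\simeq \mathcal{C}_{3^t}$ for some integer $t\ge 0$, or $G\simeq \mathcal{C}_3\times\mathcal{C}_3$.
   Context: For a finite group $G$, $\psi(G)=\sum_{x\in G} o(x)$ and $\psi'(G)=\psi(G)/\psi(\mathcal{C}_{|G|})$, where $\mathcal{C}_n$ is the cyclic group of order $n$. *)

From mathcomp Require Import all_boot all_order all_algebra all_fingroup all_solvable.
Set Implicit Arguments. Unset Strict Implicit. Unset Printing Implicit Defensive.
Import GroupScope.

Definition psi (gT : finGroupType) (G : {set gT}) : nat := \sum_(x in G) #[x].

(* psi of the cyclic group of order n, realized as Z/nZ = {0,...,n-1},
   where the order of i is n / gcd(i, n). *)
Definition psi_cyc (n : nat) : nat := \sum_(i < n) (n %/ gcdn i n).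

From mathcomp Require Import all_boot all_order all_algebra all_fingroup all_solvable.
From mathcomp Require Import zify ring.
Set Implicit Arguments. Unset Strict Implicit. Unset Printing Implicit Defensive.

(* A noncyclic 3-group G other than C_3 x C_3 has a noncyclic maximal subgroup M:
   odd p-groups of p-rank 1 are cyclic, so G contains an elementary abelian
   subgroup of order 9, and any maximal subgroup above it will do. In a noncyclic
   p-group H no element generates H, so all element orders are at most |H|/p.
   Summing over M and over G \ M gives psi(G) <= 7 N^2 / 27 for N = |G|, while
   psi(C_N) >= N phi(N) = 2 N^2 / 3, and 7/18 < 31/77. *)

Lemma psi_cyc_ge_totient n : n * totient n <= psi_cyc n.
Proof.
rewrite /psi_cyc totient_count_coprime big_mkord big_distrr /=.
apply: leq_sum => i _; rewrite coprime_sym.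
by have [/eqP -> | _] := boolP (coprime i n); rewrite ?divn1 ?muln1 ?muln0.
Qed.

Lemma psi_cyc_pfactor_ge p k : prime p -> p.-1 * (p ^ k) ^ 2 <= p * psi_cyc (p ^ k).
Proof.
move=> p_pr; case: k => [|k].
  by rewrite /psi_cyc big_ord1 gcd0n divn1 exp1n !muln1 leq_pred.
have := psi_cyc_ge_totient (p ^ k.+1); rewrite totient_pfactor //= => le_psi.
apply: leq_trans (leq_mul (leqnn p) le_psi).
rewrite (expnSr p k); nia.
Qed.

Section NoncyclicPGroup.

Variables (gT : finGroupType) (p : nat) (H : {group gT}).
Hypotheses (pH : (p.-group H)%g) (ncycH : ~~ cyclic H).

Lemma order_noncyclic_pgroup x : x \in H -> #[x]%g * p <= #|H|.
Proof.
move=> Hx; have [k oH] := p_natP pH.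
have p_pr : prime p.
  have [H1 | ntH] := eqVneq H 1%G; first by move: ncycH; rewrite H1 cyclic1.
  by have [] := pgroup_pdiv pH ntH.
have /(dvdn_pfactor _ _ p_pr) [m le_mk ox] : #[x]%g %| p ^ k by rewrite -oH order_dvdG.
have ne_mk : m != k.
  apply: contraNneq ncycH => def_m; apply/cyclicP; exists x; apply/eqP.
  by rewrite eq_sym eqEcard cycle_subG Hx -orderE ox oH def_m /=.
by rewrite oH ox -expnSr leq_exp2l ?prime_gt1 // ltn_neqAle ne_mk.
Qed.

Lemma sum_order_noncyclic_pgroup (A : {set gT}) :
  A \subset H -> (\sum_(x in A) #[x]%g) * p <= #|A| * #|H|.
Proof.
move=> sAH; rewrite big_distrl -sum_nat_const /=.
by apply: leq_sum => x Ax; apply: order_noncyclic_pgroup (subsetP sAH x Ax).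
Qed.

End NoncyclicPGroup.

Lemma psi_maximal_noncyclic_le (gT : finGroupType) (p : nat) (G M : {group gT}) :
    (p.-group G)%g -> maximal M G -> ~~ cyclic M ->
  psi G * p ^ 3 <= (p * p.-1).+1 * #|G| ^ 2.
Proof.
move=> pG maxM ncycM; have sMG := proper_sub (maxgroupp maxM).
have pM := pgroupS sMG pG.
have ncycG : ~~ cyclic G by apply: contra ncycM; apply: cyclicS.
have oG : #|G| = #|M| * p by rewrite -(p_maximal_index pG maxM) Lagrange.
have oGM : #|G :\: M| = #|M| * p.-1 by rewrite cardsD (setIidPr sMG) oG; nia.
have psiM := sum_order_noncyclic_pgroup pM ncycM (subxx M).
have psiGM := sum_order_noncyclic_pgroup pG ncycG (subsetDl G M).
have le_psi : psi G * p <= (p * p.-1).+1 * #|M| ^ 2.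
  rewrite /psi (big_setID M) /= (setIidPr sMG) mulnDl.
  apply: leq_trans (leq_add psiM psiGM) _; rewrite oGM oG mulSn.
  by apply: eq_leq; ring.
by rewrite oG (expnS p 2) mulnA expnMn mulnA leq_mul2r le_psi orbT.
Qed.

Lemma noncyclic_odd_pgroup_abelem_or_maximal
    (gT : finGroupType) (p : nat) (G : {group gT}) :
    odd p -> (p.-group G)%g -> ~~ cyclic G ->
  (p.-abelem G)%g /\ #|G| = p ^ 2
  \/ exists2 M : {group gT}, maximal M G & ~~ cyclic M.
Proof.
move=> odd_p pG ncycG.
have : 1 < 'r_p(G)%g.
  rewrite ltnNge -odd_pgroup_rank1_cyclic //.
  by have [k ->] := p_natP pG; rewrite oddX odd_p orbT.
case/p_rank_geP => E /pnElemP [sEG abelE logE].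
have ncycE : ~~ cyclic E by rewrite (abelem_cyclic abelE) logE.
have [defE | [M maxM sEM]] := maximal_exists sEG.
  by left; rewrite -defE (card_pgroup (abelem_pgroup abelE)) logE.
by right; exists M => //; apply: contra ncycE; apply: cyclicS.
Qed.

Lemma abelem_Zp_prod p : prime p -> (p.-abelem [set: 'Z_p * 'Z_p])%g.
Proof.
move=> p_pr; rewrite abelemE //; apply/andP; split.
  apply/centsP => [[a b]] _ [c d] _.
  by rewrite /commute; congr (_, _); apply: Zp_mulgC.
apply/exponentP => [[a b]] _.
have exp_pair n : ((a, b) ^+ n = (a ^+ n, b ^+ n))%g.
  by elim: n => // n IHn; rewrite !expgS IHn.
have exp_p (z : 'Z_p) : (z ^+ p)%g = 1%g.
  rewrite Zp_expg; apply/val_inj => /=.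
  by rewrite -[X in _ * X](Zp_cast (prime_gt1 p_pr)) modnMl.
by rewrite exp_pair !exp_p.
Qed.

Theorem proposition3p4 (gT : finGroupType) (G : {group gT}) :
  (3.-group G)%g ->
  31 * psi_cyc #|G| < 77 * psi G ->
  (exists t : nat, (G \isog Zp (3 ^ t))%g) \/
  (G \isog [set: 'Z_3 * 'Z_3])%g.
Proof.
move=> pG big_psi; have [n oG] := p_natP pG.
have [/cyclicP[a defG] | ncycG] := boolP (cyclic G).
  by left; exists n; rewrite isog_sym defG -oG defG -orderE Zp_isog.
have [[abelG oG2] | [M maxM ncycM]] :=
  noncyclic_odd_pgroup_abelem_or_maximal (isT : odd 3) pG ncycG.
  right; rewrite (isog_abelem_card _ abelG) abelem_Zp_prod //.
  by rewrite cardsT card_prod card_ord oG2.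
have psiG := psi_maximal_noncyclic_le pG maxM ncycM.
have psi_cyc_G := psi_cyc_pfactor_ge n (isT : prime 3).
rewrite -oG in psi_cyc_G; have G_gt0 := cardG_gt0 G.
exfalso; move: big_psi psiG psi_cyc_G; rewrite !expnS expn0 /=.
set N := #|G|; set c := psi_cyc N; set s := psi G; clearbody N c s; nia.
Qed.
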